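(* Let $m\ge2$, $1\le p<\infty$ and $1\le j\le m$. Then for all $s\in\mathbb R$, $$\sum_{n\in\mathbb N^m,\ |n|=k}|sn_j-1|^p\approx k^{p+m-1}|s|^p+k^{m-1},$$ where the constants in $\approx$ may depend on $p$ and $m$ but not on $k$ or $s$.
   Context: For quantities $F_k,G_k$ depending on $k\in\mathbb N$, $F_k\approx G_k$ means there are positive constants $A,B,k_0$ with $AG_k\le F_k\le BG_k$ for all $k\ge k_0$. $|n|=n_1+\dots+n_m$. *)

From HB Require Import structures.
From mathcomp Require Import all_boot all_order all_algebra.
From mathcomp Require Import all_classical all_reals all_analysis.
Set Implicit Arguments. Unset Strict Implicit. Unset Printing Implicit Defensive.
Import Order.TTheory GRing.Theory Num.Theory.
Local Open Scope ring_scope.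

Definition mi_abs (m : nat) (n : 'I_m -> nat) : nat := (\sum_(i < m) n i)%N.

(* Multi-indices n in N^m with |n| = k: every entry is <= k, so they are exactly
   the n : {ffun 'I_m -> 'I_k.+1} (values read as nats) with |n| = k. *)
Definition lhs4p4 (R : realType) (m : nat) (p s : R) (j : 'I_m) (k : nat) : R :=
  \sum_(n : {ffun 'I_m -> 'I_k.+1} | mi_abs (fun i => nat_of_ord (n i)) == k)
     powR `|s * (nat_of_ord (n j))%:R - 1| p.

Definition rhs4p4 (R : realType) (m : nat) (p s : R) (k : nat) : R :=
  powR k%:R (p + (m - 1)%:R) * powR `|s| p + (k ^ (m - 1))%:R.

From HB Require Import structures.
From mathcomp Require Import all_boot all_order all_algebra.
From mathcomp Require Import all_classical all_reals all_analysis.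
From mathcomp Require Import zify ring lra.
Import Order.TTheory GRing.Theory Num.Theory.

(* There are at most (k+1)^(m-1) multi-indices with |n| = k, and each term is at most
   2^p ((|s| k)^p + 1): this is the upper bound.  For the lower bound, at least
   (k/8m)^(m-1) of them have a prescribed coordinate n_i >= 7k/8 (choose the other
   coordinates freely up to k/8m and put the rest on n_i).  If 0 <= s <= 4/k, take i <> j,
   which forces n_j <= k/8 and |s n_j - 1| >= 1/2; otherwise take i = j, which gives
   |s n_j - 1| >= |s| k / 8 and >= 1/2.  Either way each such term is at least
   ((|s| k)^p + 1) / (2 8^p). *)

Definition multi_indices (m k : nat) : {set {ffun 'I_m -> 'I_k.+1}} :=
  [set n : {ffun 'I_m -> 'I_k.+1} | mi_abs (fun i => nat_of_ord (n i)) == k].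

Lemma mi_absD1 {m : nat} (i0 : 'I_m.+1) (n : 'I_m.+1 -> nat) :
  mi_abs n = (n i0 + mi_abs (fun i => n (lift i0 i)))%N.
Proof. by rewrite /mi_abs (bigD1_ord i0). Qed.

Lemma card_multi_indices_le (m k : nat) : (#|multi_indices m.+1 k| <= k.+1 ^ m)%N.
Proof.
pose drop0 (n : {ffun 'I_m.+1 -> 'I_k.+1}) := [ffun i => n (lift ord0 i)].
have drop0_inj : {in multi_indices m.+1 k &, injective drop0}.
  move=> n1 n2; rewrite !inE !(mi_absD1 ord0) => /eqP sum1 /eqP sum2 eq12.
  have eq_lift i : n1 (lift ord0 i) = n2 (lift ord0 i).
    by have := congr1 (fun g : {ffun _ -> _} => g i) eq12; rewrite !ffunE.
  apply/ffunP => i; case: (unliftP ord0 i) => [i'|] -> //; apply: val_inj.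
  move: (etrans sum1 (esym sum2)); rewrite /mi_abs.
  by rewrite (eq_bigr _ (fun i _ => congr1 val (eq_lift i))) => /addIn.
rewrite -(card_in_imset drop0_inj); apply: leq_trans (max_card _) _.
by rewrite card_ffun !card_ord.
Qed.

Lemma card_multi_indices_dominant_ge {m : nat} (k q : nat) (i0 : 'I_m.+1) :
  (m * q <= k)%N ->
  (q.+1 ^ m <= #|[set n in multi_indices m.+1 k | k - m * q <= n i0]|)%N.
Proof.
move=> mq_le_k.
pose extend (g : {ffun 'I_m -> 'I_q.+1}) : {ffun 'I_m.+1 -> 'I_k.+1} :=
  [ffun i => if unlift i0 i is Some i' then inord (g i')
             else inord (k - \sum_(i' < m) g i')].
have sum_le (g : {ffun 'I_m -> 'I_q.+1}) : (\sum_(i < m) nat_of_ord (g i) <= m * q)%N.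
  have -> : (m * q = \sum_(i < m) q)%N by rewrite sum_nat_const card_ord.
  by apply: leq_sum => i _; rewrite -ltnS.
have extend_lift (g : {ffun 'I_m -> 'I_q.+1}) i : nat_of_ord (extend g (lift i0 i)) = g i.
  (* [i] witnesses [0 < m], so [q <= m * q <= k]. *)
  by rewrite ffunE liftK inordK //; move: (ltn_ord (g i)) (ltn_ord i); nia.
have extend_i0 (g : {ffun 'I_m -> 'I_q.+1}) : nat_of_ord (extend g i0) = (k - \sum_(i < m) g i)%N.
  by rewrite ffunE unlift_none inordK //; lia.
have extend_inj : injective extend.
  move=> g1 g2 eq12; apply/ffunP => i; apply: val_inj.
  by rewrite /= -(extend_lift g1) eq12 extend_lift.
have -> : (q.+1 ^ m = #|[set: {ffun 'I_m -> 'I_q.+1}]|)%N.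
  by rewrite cardsT card_ffun !card_ord.
rewrite -(card_imset _ extend_inj); apply: subset_leq_card.
apply/fintype.subsetP => _ /imsetP [g _ ->].
rewrite !inE (mi_absD1 i0) /mi_abs extend_i0 (eq_bigr _ (fun i _ => extend_lift g i)).
have := sum_le g; rewrite /= => sum_le_mq; apply/andP; split; [apply/eqP|]; lia.
Qed.

Lemma mi_abs_ge_pair {m : nat} (n : 'I_m -> nat) {i i' : 'I_m} :
  i' != i -> (n i + n i' <= mi_abs n)%N.
Proof.
move=> ne_i'i; rewrite /mi_abs (bigD1 i) //= (bigD1 i') /=; last by rewrite ne_i'i.
by rewrite addnA leq_addr.
Qed.

Local Open Scope ring_scope.

Lemma sum_le_card_mul {R : numDomainType} {I : finType} {A : {pred I}} {F : I -> R} {b : R} :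
  (forall i, i \in A -> F i <= b) -> \sum_(i in A) F i <= #|A|%:R * b.
Proof. by move=> F_le_b; rewrite mulr_natl -sumr_const; apply: ler_sum. Qed.

Lemma card_mul_le_sum {R : numDomainType} {I : finType} {A B : {set I}} {F : I -> R} {c : R} :
  B \subset A -> (forall i, i \in A -> 0 <= F i) -> (forall i, i \in B -> c <= F i) ->
  #|B|%:R * c <= \sum_(i in A) F i.
Proof.
move=> /finset.setIidPr sBA F_ge0 c_le_F.
rewrite (big_setID B) /= sBA -[X in X <= _]addr0 mulr_natl -sumr_const.
apply: lerD; first exact: ler_sum.
by apply: sumr_ge0 => i /setDP [+ _]; exact: F_ge0.
Qed.

Lemma card_multi_indices_dominant_ge_real {R : numFieldType} {m : nat} (k : nat) (i0 : 'I_m.+1) :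
  (k%:R / (8 * m.+1)%:R) ^+ m <=
  #|[set n in multi_indices m.+1 k | 7 * k <= 8 * n i0]%N|%:R :> R.
Proof.
set q := (k %/ (8 * m.+1))%N.
have k_le : k%:R / (8 * m.+1)%:R <= q.+1%:R :> R.
  by rewrite ler_pdivrMr ?ltr0n // -natrM ler_nat ltnW // ltn_ceil.
have mq_le : (8 * (m * q) <= k)%N.
  by apply: leq_trans (leq_divM k (8 * m.+1)); rewrite mulnC; nia.
clearbody q; apply: le_trans (_ : (q.+1 ^ m)%:R <= _); last rewrite ler_nat.
  by rewrite natrX lerXn2r // nnegrE // divr_ge0.
apply: leq_trans (card_multi_indices_dominant_ge k q i0 _) _; first lia.
apply/subset_leq_card/fintype.subsetP => n; rewrite !inE => /andP [-> dom] /=.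
apply: leq_trans (leq_mul (leqnn 8) dom); lia.
Qed.

Section PowerBounds.
Context {R : realType} {p : R} (p_ge0 : 0 <= p).

Lemma powR_add1_le (x : R) : 0 <= x -> powR (x + 1) p <= powR 2 p * (powR x p + 1).
Proof.
move=> x_ge0; set M := Num.max x 1.
have M_ge1 : 1 <= M by rewrite le_max lexx orbT.
have x1_le : x + 1 <= 2 * M by rewrite /M; case: (leP x 1) => x1; lra.
have M_pow_le : powR M p <= powR x p + 1.
  by rewrite /M; case: (leP x 1) => _; rewrite ?powR1 ?lerDl ?lerDr ?powR_ge0.
apply: le_trans (ge0_ler_powR p_ge0 _ _ x1_le) _; rewrite ?nnegrE; try lra.
by rewrite powRM; [rewrite ler_wpM2l ?powR_ge0 | lra | lra].
Qed.

Lemma dist_one_powR_le (s t K : R) : 0 <= t <= K ->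
  powR `|s * t - 1| p <= powR 2 p * (powR (`|s| * K) p + 1).
Proof.
move=> /andP [t_ge0 t_leK]; have sK_ge0 : 0 <= `|s| * K by rewrite mulr_ge0 // (le_trans t_ge0).
have dist_le : `|s * t - 1| <= `|s| * K + 1.
  apply: le_trans (ler_normB _ _) _; rewrite normr1 normrM (ger0_norm t_ge0) lerD2r.
  exact: ler_wpM2l.
apply: le_trans (ge0_ler_powR p_ge0 _ _ dist_le) _; rewrite ?nnegrE //.
  by rewrite addr_ge0.
exact: powR_add1_le.
Qed.

Lemma powR_add1_ge (x y : R) : 0 <= x -> 1 / 2 <= y -> x <= 8 * y ->
  powR x p + 1 <= 2 * powR 8 p * powR y p.
Proof.
move=> x_ge0 y_ge x_le.
have y_ge0 : 0 <= y by lra.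
have pow2_le : powR 2 p <= powR 8 p by apply: ge0_ler_powR; rewrite ?nnegrE //; lra.
have one_le : 1 <= powR 2 p * powR y p.
  rewrite -powRM //.
  apply: le_trans (_ : powR 1 p <= _); first by rewrite powR1.
  by apply: ge0_ler_powR; rewrite ?nnegrE //; lra.
have x_pow_le : powR x p <= powR 8 p * powR y p.
  by rewrite -powRM //; apply: ge0_ler_powR; rewrite ?nnegrE //; lra.
have := ler_wpM2r (powR_ge0 y p) pow2_le; lra.
Qed.

End PowerBounds.

Lemma dist_one_small_weight {R : realType} (s K t : R) :
  0 <= s -> s * K <= 4 -> 0 <= t -> 8 * t <= K ->
  1 / 2 <= `|s * t - 1| /\ `|s| * K <= 8 * `|s * t - 1|.
Proof.
move=> s_ge0 sK_le t_ge0 t_le; have st_le : 8 * (s * t) <= s * K by nra.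
rewrite (ger0_norm s_ge0) (ler0_norm (_ : s * t - 1 <= 0)); first split; lra.
Qed.

Lemma dist_one_large_weight {R : realType} (s K t : R) :
  0 <= K -> (s < 0) || (4 < s * K) -> 7 * K <= 8 * t ->
  1 / 2 <= `|s * t - 1| /\ `|s| * K <= 8 * `|s * t - 1|.
Proof.
move=> K_ge0 /orP [s_lt0 | sK_gt] t_ge.
- have st_le : 8 * (s * t) <= 7 * (s * K) by nra.
  have sK_le0 : s * K <= 0 by nra.
  rewrite (ltr0_norm s_lt0) (ler0_norm (_ : s * t - 1 <= 0)); first split; lra.
- have s_ge0 : 0 <= s by nra.
  have st_ge : 7 * (s * K) <= 8 * (s * t) by nra.
  rewrite (ger0_norm s_ge0) (ger0_norm (_ : 0 <= s * t - 1)); first split; lra.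
Qed.

Section Estimates.
Variables (R : realType) (m : nat) (p : R).
Hypothesis p_ge0 : 0 <= p.

Lemma lhs4p4E (s : R) (j : 'I_m.+1) (k : nat) :
  lhs4p4 p s j k = \sum_(n in multi_indices m.+1 k) powR `|s * (n j)%:R - 1| p.
Proof. by apply: eq_bigl => n; rewrite inE. Qed.

Lemma rhs4p4E (s : R) (k : nat) : (0 < k)%N ->
  rhs4p4 m.+1 p s k = k%:R ^+ m * (powR (`|s| * k%:R) p + 1).
Proof.
move=> k_gt0; rewrite /rhs4p4 subSS subn0 powRD; last by rewrite pnatr_eq0 -lt0n k_gt0 implybT.
by rewrite powR_mulrn // natrX powRM //; ring.
Qed.

Lemma lhs4p4_le (s : R) (j : 'I_m.+1) (k : nat) : (0 < k)%N ->
  lhs4p4 p s j k <= 2 ^+ m * powR 2 p * rhs4p4 m.+1 p s k.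
Proof.
move=> k_gt0; rewrite lhs4p4E rhs4p4E //; set X := powR (`|s| * k%:R) p.
apply: le_trans (sum_le_card_mul (b := powR 2 p * (X + 1)) _) _.
  by move=> n _; apply: (dist_one_powR_le p_ge0); rewrite ler0n ler_nat /= -ltnS ltn_ord.
have card_le : #|multi_indices m.+1 k|%:R <= 2 ^+ m * k%:R ^+ m :> R.
  apply: le_trans (_ : (k.+1 ^ m)%:R <= _); first by rewrite ler_nat card_multi_indices_le.
  by rewrite natrX -exprMn lerXn2r ?nnegrE // -natrM ler_nat; lia.
apply: le_trans (ler_wpM2r _ card_le) _; first by rewrite mulr_ge0 ?addr_ge0 ?powR_ge0.
by rewrite mulrACA.
Qed.

Lemma lhs4p4_ge_on_dominant (s : R) (j i0 : 'I_m.+1) (k : nat) : (0 < k)%N ->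
  (forall n, n \in multi_indices m.+1 k -> (7 * k <= 8 * n i0)%N ->
     1 / 2 <= `|s * (n j)%:R - 1| /\ `|s| * k%:R <= 8 * `|s * (n j)%:R - 1|) ->
  ((8 * m.+1)%:R ^+ m)^-1 / (2 * powR 8 p) * rhs4p4 m.+1 p s k <= lhs4p4 p s j k.
Proof.
move=> k_gt0 dist_ge; rewrite lhs4p4E rhs4p4E //; set X := powR (`|s| * k%:R) p.
have c_ge0 : 0 <= (X + 1) / (2 * powR 8 p) by rewrite divr_ge0 ?addr_ge0 ?mulr_ge0 ?powR_ge0.
apply: le_trans (card_mul_le_sum
  (B := [set n in multi_indices m.+1 k | 7 * k <= 8 * n i0]%N) (c := (X + 1) / (2 * powR 8 p)) _ _ _).
- apply: le_trans (ler_wpM2r c_ge0 (card_multi_indices_dominant_ge_real k i0)).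
  by rewrite expr_div_n mulrACA [_^-1 * k%:R ^+ m]mulrC [_^-1 * (X + 1)]mulrC.
- by apply/fintype.subsetP => n; rewrite inE => /andP [].
- by move=> n _; exact: powR_ge0.
- move=> n; rewrite inE => /andP [n_in dom]; have [half_le sk_le] := dist_ge n n_in dom.
  rewrite ler_pdivrMr ?mulr_gt0 ?powR_gt0 // mulrC.
  by apply: (powR_add1_ge p_ge0); rewrite ?mulr_ge0.
Qed.

Lemma lhs4p4_ge (s : R) (j : 'I_m.+1) (k : nat) : (0 < m)%N -> (0 < k)%N ->
  ((8 * m.+1)%:R ^+ m)^-1 / (2 * powR 8 p) * rhs4p4 m.+1 p s k <= lhs4p4 p s j k.
Proof.
move=> m_gt0 k_gt0; case: (boolP ((0 <= s) && (s * k%:R <= 4))) => [/andP [s_ge0 sk_le] | ].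
- have [j' j'_neq_j] : exists j' : 'I_m.+1, j' != j.
    case: (eqVneq j ord0) => [-> | j_neq0]; last by exists ord0; rewrite eq_sym.
    by exists ord_max; rewrite -(inj_eq val_inj) /= -lt0n.
  apply: (lhs4p4_ge_on_dominant s j j') => // n; rewrite inE => /eqP abs_n dom.
  apply: dist_one_small_weight; rewrite ?ler0n // -natrM ler_nat.
  by have := mi_abs_ge_pair (fun i => nat_of_ord (n i)) j'_neq_j; rewrite abs_n; lia.
- rewrite negb_and -!ltNge => sk_large.
  apply: (lhs4p4_ge_on_dominant s j j) => // n _ dom.
  by apply: dist_one_large_weight; rewrite ?ler0n // -!natrM ler_nat.
Qed.

End Estimates.

Theorem lemma4p4 (R : realType) (m : nat) (p : R) :
  (2 <= m)%N -> 1 <= p ->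
  exists (A B : R) (k0 : nat), 0 < A /\ 0 < B /\
    forall (j : 'I_m) (s : R) (k : nat), (k0 <= k)%N ->
      A * rhs4p4 m p s k <= lhs4p4 p s j k /\ lhs4p4 p s j k <= B * rhs4p4 m p s k.
Proof.
case: m => [//|m] m_ge2 p_ge1; have p_ge0 : 0 <= p by lra.
exists (((8 * m.+1)%:R ^+ m)^-1 / (2 * powR 8 p)), (2 ^+ m * powR 2 p), 1%N.
split; first by rewrite divr_gt0 ?invr_gt0 ?exprn_gt0 ?ltr0n ?mulr_gt0 ?powR_gt0.
split; first by rewrite mulr_gt0 ?exprn_gt0 ?powR_gt0.
move=> j s k k_gt0; split; first exact: lhs4p4_ge.
exact: lhs4p4_le.
Qed.
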